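(* Let $N\ge2$ and consider the function $$D(p)=2\log N+\frac1N\sum_{k=1}^N(\log p_k)^2-\frac1{N^2}\Big(\sum_{k=1}^N\log p_k\Big)^2+\frac2N\sum_{k=1}^N\log p_k$$ on the open simplex $\{p=(p_1,\dots,p_N): p_k>0,\ \sum_k p_k=1\}$. If $p$ is a point of local extremum of $D$ on this set, then either $p=(1/N,\dots,1/N)$ or the coordinates of $p$ take exactly two distinct values.
   Context: For a probability vector $p$ with all $p_k>0$, $D(p)$ equals $\lim_{\alpha\to0+}\frac{\partial^2}{\partial\alpha^2}\mathcal H_\alpha(p)$, where $\mathcal H_\alpha(p)=\frac{1}{1-\alpha}\log\sum_{k=1}^N p_k^\alpha$ is the Rényi entropy; the paper denotes it $\mathcal H''_0(p)$. Logarithms are natural. *)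

From mathcomp Require Import all_boot all_order all_algebra.
From mathcomp Require Import reals exp.
Set Implicit Arguments. Unset Strict Implicit. Unset Printing Implicit Defensive.
Import Order.TTheory GRing.Theory Num.Theory.
Local Open Scope ring_scope.

Definition open_simplex (R : realType) (N : nat) (p : 'I_N -> R) : Prop :=
  (forall k, 0 < p k) /\ \sum_(k < N) p k = 1.

Definition Dfun (R : realType) (N : nat) (p : 'I_N -> R) : R :=
  2 * ln (N%:R) + (N%:R)^-1 * \sum_(k < N) (ln (p k)) ^+ 2
  - (N%:R ^+ 2)^-1 * (\sum_(k < N) ln (p k)) ^+ 2
  + 2 / N%:R * \sum_(k < N) ln (p k).

(* p is a local maximum / minimum of f on the set S (neighbourhoods taken in
   the sup-norm, which induces the standard topology of R^N) *)
Definition local_max_on (R : realType) (N : nat) (S : ('I_N -> R) -> Prop)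
  (f : ('I_N -> R) -> R) (p : 'I_N -> R) : Prop :=
  S p /\ exists eps : R, 0 < eps /\
    forall q, S q -> (forall k, `|q k - p k| < eps) -> f q <= f p.

Definition local_min_on (R : realType) (N : nat) (S : ('I_N -> R) -> Prop)
  (f : ('I_N -> R) -> R) (p : 'I_N -> R) : Prop :=
  S p /\ exists eps : R, 0 < eps /\
    forall q, S q -> (forall k, `|q k - p k| < eps) -> f p <= f q.

Definition local_extremum_on (R : realType) (N : nat) (S : ('I_N -> R) -> Prop)
  (f : ('I_N -> R) -> R) (p : 'I_N -> R) : Prop :=
  local_max_on S f p \/ local_min_on S f p.

From mathcomp Require Import all_boot all_order all_algebra.
From mathcomp Require Import reals exp.
From mathcomp Require Import boolp functions topology normedtype sequences derive realfun.
From mathcomp Require Import ring lra.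
Set Implicit Arguments. Unset Strict Implicit. Unset Printing Implicit Defensive.
Import Order.TTheory GRing.Theory Num.Theory.
Import numFieldNormedType.Exports.
Local Open Scope ring_scope.

(* Write S(x) = sum_l ln x_l.  The partial derivatives of D
   are  dD/dx_k = (2/N) (ln x_k - S(x)/N + 1) / x_k  (the "gradient" [Dgrad]).
   Moving mass between two coordinates i <> j, i.e. following the line
   p + t (e_i - e_j), stays in the open simplex for small |t|; at a local
   extremum p the derivative of D along this line vanishes (Fermat), which
   gives  Dgrad p i = Dgrad p j  for all i, j.  Setting u = ln x_k, we have
   Dgrad x k = (2/N) psi (ln x_k)  with  psi u = (u + c) e^{-u},
   c = 1 - S(p)/N.  The function psi is strictly increasing on u + c <= 1 and
   strictly decreasing on u + c >= 1, so it takes each value at most twice.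
   Since ln is injective, the coordinates of p take at most two values; if
   they take only one, the constraint sum p_k = 1 forces p_k = 1/N. *)

Section DerivativeAlongLines.
Variable R : realType.

Definition line {N : nat} (p c : 'I_N -> R) (t : R) : 'I_N -> R :=
  fun k => p k + t * c k.

Definition Dgrad {N : nat} (x : 'I_N -> R) (k : 'I_N) : R :=
  2 / N%:R * ((ln (x k) - (\sum_(l < N) ln (x l)) / N%:R + 1) / x k).

Lemma is_derive_ln_affine (a b t : R) : 0 < a + t * b ->
  is_derive t 1 (fun s => ln (a + s * b)) (b / (a + t * b)).
Proof.
move=> pos; rewrite mulrC.
have affine : is_derive t 1 (fun s => a + s * b) b.
  have sum_rule := is_deriveD (is_derive_cst a t 1)
    (is_deriveM (is_derive_id t 1) (is_derive_cst b t 1)).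
  by apply: (is_derive_eq sum_rule); rewrite /= scaler0 !add0r; apply: mulr1.
have chain_rule :=
  @is_derive1_comp R (@ln R) (fun s => a + s * b) t _ _ (is_derive1_ln pos) affine.
exact: chain_rule.
Qed.

Lemma is_derive_Dfun_line (N : nat) (p c : 'I_N -> R) (t : R) :
  (forall k, 0 < line p c t k) ->
  is_derive t 1 (fun s => Dfun (line p c s))
    (\sum_(k < N) c k * Dgrad (line p c t) k).
Proof.
move=> pos; rewrite /Dfun /line.
set x := line p c t.
have dlog (k : 'I_N) : is_derive t 1 (fun s => ln (p k + s * c k)) (c k / x k).
  exact: is_derive_ln_affine (pos k).
have dS := is_derive_sum dlog; rewrite fct_sumE in dS.
have dQ := is_derive_sum (fun k => is_deriveX 2 (dlog k)).
rewrite fct_sumE in dQ.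
have dD := is_deriveD (is_deriveB (is_deriveD (is_derive_cst (2 * ln (N%:R : R)) t 1)
    (is_deriveM (is_derive_cst (N%:R^-1 : R) t 1) dQ))
    (is_deriveM (is_derive_cst ((N%:R ^+ 2)^-1 : R) t 1) (is_deriveX 2 dS)))
  (is_deriveM (is_derive_cst (2 / N%:R : R) t 1) dS).
apply: (is_derive_eq dD).
set S := \sum_(k < N) ln (x k).
rewrite /= /cst !scaler0 !add0r !addr0 /GRing.scale /= /Dgrad -/S -exprVn.
clearbody S; rewrite mulrA !mulr_sumr -sumrB -big_split /=.
by apply: eq_bigr => k _; rewrite expr1 /x /line; ring.
Qed.

End DerivativeAlongLines.
Arguments line {R N}.
Arguments Dgrad {R N}.

Section FirstOrderCondition.
Variable R : realType.

Definition transfer {N : nat} (i j k : 'I_N) : R := (k == i)%:R - (k == j)%:R.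

Lemma transfer_cases (N : nat) (i j k : 'I_N) : i != j ->
  [\/ k = i /\ transfer i j k = 1, k = j /\ transfer i j k = -1
     | transfer i j k = 0].
Proof.
move=> ij; rewrite /transfer.
case: (eqVneq k i) => [->|ki]; first by apply: Or31; rewrite (negbTE ij) subr0.
case: (eqVneq k j) => [->|kj]; first by apply: Or32; rewrite sub0r.
by apply: Or33; rewrite subrr.
Qed.

Lemma sum_transfer (N : nat) (i j : 'I_N) (a : 'I_N -> R) : i != j ->
  \sum_(k < N) transfer i j k * a k = a i - a j.
Proof.
move=> ij; rewrite (bigD1 i) //= (bigD1 j) 1?eq_sym //= big1; last first.
  by move=> k /andP[ki kj]; rewrite /transfer (negbTE ki) (negbTE kj) subrr mul0r.
rewrite /transfer eqxx (negbTE ij) eq_sym (negbTE ij) eqxx.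
by rewrite addr0 subr0 sub0r mul1r mulN1r.
Qed.

Lemma transfer_in_simplex (N : nat) (p : 'I_N -> R) (i j : 'I_N) (t : R) :
  i != j -> open_simplex p -> `|t| < Num.min (p i) (p j) ->
  open_simplex (line p (transfer i j) t) /\
  (forall k, `|line p (transfer i j) t k - p k| <= `|t|).
Proof.
move=> ij [pos sum1]; rewrite lt_min !ltr_norml => /andP[/andP[ti1 ti2] /andP[tj1 tj2]].
split; first split.
- move=> k; rewrite /line.
  by case: (transfer_cases k ij) => [[-> ->]|[-> ->]|->]; rewrite ?mulr1 ?mulrN1 ?mulr0;
    [lra | lra | rewrite addr0].
- rewrite /line big_split /= sum1 -mulr_sumr.
  have := sum_transfer (fun=> 1) ij; under eq_bigr do rewrite mulr1.
  by move=> ->; rewrite subrr mulr0 addr0.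
- move=> k; rewrite /line addrAC subrr add0r normrM.
  by case: (transfer_cases k ij) => [[_ ->]|[_ ->]|->];
    rewrite ?normrN ?normr1 ?normr0 ?mulr1 ?mulr0.
Qed.

Lemma stationary_at_extremum (g : R -> R) (d : R) : 0 < d ->
  (forall t, t \in `]-d, d[ -> derivable g t (1 : R)) ->
  (forall t, t \in `]-d, d[ -> g t <= g 0) \/
  (forall t, t \in `]-d, d[ -> g 0 <= g t) ->
  is_derive (0 : R) (1 : R) g 0.
Proof.
move=> d0 dg; have d_le : -d <= d by lra.
have zd : (0 : R) \in `]-d, d[ by rewrite in_itv /=; apply/andP; split; lra.
by case=> ext; [exact: derive1_at_max dg zd ext | exact: derive1_at_min dg zd ext].
Qed.

Lemma extremum_balanced_gradient (N : nat) (p : 'I_N -> R) (i j : 'I_N) :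
  local_extremum_on (@open_simplex R N) (@Dfun R N) p -> Dgrad p i = Dgrad p j.
Proof.
move=> hext; have [pos sum1] : open_simplex p by case: hext => -[].
have [->//|ij] := eqVneq i j.
have [e [e0 cmp]] : exists e : R, 0 < e /\
    ((forall q, open_simplex q -> (forall k, `|q k - p k| < e) -> Dfun q <= Dfun p) \/
     (forall q, open_simplex q -> (forall k, `|q k - p k| < e) -> Dfun p <= Dfun q)).
  by case: hext => -[_ [e [e0 he]]]; exists e; split=> //; [left | right].
set g := fun s => Dfun (line p (transfer i j) s).
set d := Num.min e (Num.min (p i) (p j)).
have d0 : 0 < d by rewrite !lt_min e0 !pos.
have near_p (t : R) : t \in `]-d, d[ -> open_simplex (line p (transfer i j) t) /\
    (forall k, `|line p (transfer i j) t k - p k| < e).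
  rewrite in_itv /= -ltr_norml lt_min => /andP[te tij].
  have [inS close] := transfer_in_simplex ij (conj pos sum1) tij.
  by split=> // k; apply: le_lt_trans (close k) te.
have line0 : line p (transfer i j) 0 = p.
  by apply: funext => k; rewrite /line mul0r addr0.
have g_stat : is_derive (0 : R) (1 : R) g 0.
  apply: (stationary_at_extremum d0).
    move=> t /near_p [[post _] _]; have Dg := is_derive_Dfun_line post; exact: ex_derive.
  by case: cmp => ext; [left|right] => t /near_p [inS close]; rewrite /g line0; apply: ext.
have g_grad : is_derive (0 : R) (1 : R) g (\sum_(k < N) transfer i j k * Dgrad p k).
  by rewrite -line0; apply: is_derive_Dfun_line; rewrite line0.
apply/eqP; rewrite -subr_eq0 -(sum_transfer _ ij).
by rewrite -(@derive_val _ _ _ _ _ _ _ g_grad) (@derive_val _ _ _ _ _ _ _ g_stat).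
Qed.

End FirstOrderCondition.

Section TwoValues.
Variable R : realType.

Definition psi (c u : R) : R := (u + c) * expR (- u).

Lemma Dgrad_psi (N : nat) (x : 'I_N -> R) (k : 'I_N) : 0 < x k ->
  Dgrad x k = 2 / N%:R * psi (1 - (\sum_(l < N) ln (x l)) / N%:R) (ln (x k)).
Proof. by move=> xk; rewrite /Dgrad /psi expRN lnK ?posrE //; congr (_ * _); ring. Qed.

Lemma psi_increasing (c u v : R) : u < v -> v + c <= 1 -> psi c u < psi c v.
Proof.
move=> uv vc; rewrite /psi.
have -> : expR (- v) = expR (u - v) * expR (- u) by rewrite -expRD; congr expR; ring.
rewrite mulrA ltr_pM2r ?expR_gt0 //.
have tangent : 1 + (u - v) < expR (u - v) by apply: expR_gt1Dx; rewrite subr_eq0 lt_eqF.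
have below1 : expR (u - v) < 1 by rewrite expR_lt1 subr_lt0.
have := expR_gt0 (u - v); case: (lerP (v + c) 0) => vc0; nra.
Qed.

Lemma psi_decreasing (c u v : R) : u < v -> 1 <= u + c -> psi c v < psi c u.
Proof.
move=> uv uc; rewrite /psi.
have -> : expR (- u) = expR (v - u) * expR (- v) by rewrite -expRD; congr expR; ring.
rewrite mulrA ltr_pM2r ?expR_gt0 //.
have tangent : 1 + (v - u) < expR (v - u) by apply: expR_gt1Dx; rewrite subr_eq0 gt_eqF.
nra.
Qed.

Lemma psi_eq_opposite_sides (c u v : R) : psi c u = psi c v -> u != v ->
  (u + c < 1) = ~~ (v + c < 1).
Proof.
wlog uv : u v / u < v.
  move=> wlog_uv e; rewrite neq_lt => /orP[lt|lt]; first by apply: wlog_uv; rewrite ?lt_eqF.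
  by rewrite (wlog_uv v u lt) ?negbK ?lt_eqF.
move=> e _.
have -> : u + c < 1.
  by rewrite ltNge; apply/negP => uc; have := psi_decreasing uv uc; rewrite e ltxx.
suff : ~~ (v + c < 1) by move=> ->.
by apply/negP => /ltW vc; have := psi_increasing uv vc; rewrite e ltxx.
Qed.

Lemma psi_no_three_points (c u v w : R) :
  psi c u = psi c v -> psi c v = psi c w -> u != v -> v != w -> u != w -> False.
Proof.
move=> e1 e2 uv vw uw.
have := psi_eq_opposite_sides e1 uv; have := psi_eq_opposite_sides e2 vw.
have := psi_eq_opposite_sides (etrans e1 e2) uw.
by case: (u + c < 1); case: (v + c < 1); case: (w + c < 1).
Qed.

End TwoValues.

Lemma at_most_two_values (T : finType) (V : eqType) (f : T -> V) (t0 : T) :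
  (forall a b c, f a != f b -> f b != f c -> f a != f c -> False) ->
  (forall k, f k = f t0) \/ (exists j, f j != f t0 /\ forall k, f k = f t0 \/ f k = f j).
Proof.
move=> no_three; case: (boolP [exists j, f j != f t0]) => [/existsP [j fj]|].
  right; exists j; split=> // k.
  case: (eqVneq (f k) (f t0)) => [|k0]; first by left.
  case: (eqVneq (f k) (f j)) => [|kj]; first by right.
  by exfalso; apply: (no_three t0 j k); rewrite // eq_sym.
by rewrite negb_exists => /forallP const; left=> k; apply/eqP; rewrite -[_ == _]negbK.
Qed.

Lemma simplex_constant (R : realType) (N : nat) (p : 'I_N -> R) (i0 : 'I_N) :
  open_simplex p -> (forall k, p k = p i0) -> forall k, p k = N%:R^-1.
Proof.
move=> [_ sum1] const k; rewrite const.
have N0 : (N%:R : R) != 0.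
  by rewrite pnatr_eq0 -lt0n; apply: leq_ltn_trans (leq0n i0) (ltn_ord i0).
have : p i0 * N%:R = 1.
  by rewrite -[RHS]sum1 (eq_bigr (fun=> p i0)) ?sumr_const ?card_ord ?mulr_natr.
by move=> pN; apply: (mulIf N0); rewrite pN mulVf.
Qed.

Theorem mainTheorem2 (R : realType) (N : nat) (hN : (2 <= N)%N) (p : 'I_N -> R) :
  local_extremum_on (@open_simplex R N) (@Dfun R N) p ->
  (forall k, p k = (N%:R)^-1) \/
  (exists a b : R, a <> b /\ (forall k, p k = a \/ p k = b) /\
     (exists i, p i = a) /\ (exists j, p j = b)).
Proof.
move=> hext; have Sp : open_simplex p by case: hext => -[].
have N_pos : (0 < N)%N by apply: leq_trans hN.
pose i0 : 'I_N := Ordinal N_pos.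
pose c := 1 - (\sum_(l < N) ln (p l)) / N%:R.
have same_psi a b : psi c (ln (p a)) = psi c (ln (p b)).
  have := extremum_balanced_gradient a b hext.
  rewrite !Dgrad_psi ?Sp.1 //; apply: mulfI.
  by rewrite mulf_neq0 ?invr_eq0 ?pnatr_eq0 // -lt0n.
have no_three a b k : p a != p b -> p b != p k -> p a != p k -> False.
  have ln_neq x y : p x != p y -> ln (p x) != ln (p y).
    by apply: contra => /eqP /ln_inj eq_ln; apply/eqP/eq_ln; rewrite posrE Sp.1.
  by move=> /ln_neq ab /ln_neq bk /ln_neq ak; apply: psi_no_three_points ab bk ak.
case: (at_most_two_values i0 no_three) => [const | [j [ji0 two]]].
  by left; apply: simplex_constant const.
right; exists (p i0), (p j); split; first by apply/eqP; rewrite eq_sym.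
by split=> //; split; [exists i0 | exists j].
Qed.
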